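(* Let $M$ and $M'$ be two stable matchings in an instance $I$ of SPA-S, and let $M^\lor$ be the assignment defined from $M,M'$ in the context. Then $M^\lor$ is a matching.
   Context: An instance $I$ of SPA-S consists of a finite set $\mathcal{S}$ of students, a finite set $\mathcal{P}$ of projects and a finite set $\mathcal{L}$ of lecturers. Each student $s_i$ ranks a subset $A_i\subseteq\mathcal{P}$ (its acceptable projects) in strict order. Each project is offered by exactly one lecturer; lecturer $l_k$ offers a nonempty set $P_k\subseteq\mathcal{P}$, the $P_k$ partitioning $\mathcal{P}$. Each lecturer $l_k$ ranks in strict order the students who find at least one project of $P_k$ acceptable. Projects have capacities $c_j\in\mathbb{Z}^+$, lecturers have capacities $d_k\in\mathbb{Z}^+$ with $\max\{c_j:p_j\in P_k\}\le d_k\le\sum\{c_j:p_j\in P_k\}$. A pair $(s_i,p_j)$, $p_j$ offered by $l_k$, is acceptable if $p_j\in A_i$ and $s_i$ is on $l_k$'s list. A matching $M$ is a set of acceptable pairs with each student in at most one pair, $|M(p_j)|\le c_j$, $|M(l_k)|\le d_k$, where for an assignment $M$ (a set of acceptable pairs), $M(s_i)$, $M(p_j)$, $M(l_k)$ denote the project of $s_i$, the students assigned to $p_j$, and the students assigned to projects of $l_k$. Undersubscribed/full means fewer than/exactly capacity many assigned students. An acceptable pair $(s_i,p_j)\notin M$ ($p_j$ offered by $l_k$) blocks $M$ if ($s_i$ is unassigned or prefers $p_j$ to $M(s_i)$) and one of: (P1) $p_j$ and $l_k$ undersubscribed; (P2) $p_j$ undersubscribed, $l_k$ full, $s_i\in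 M(l_k)$; (P3) $p_j$ undersubscribed, $l_k$ full, $l_k$ prefers $s_i$ to the worst student of $M(l_k)$; (P4) $p_j$ full and $l_k$ prefers $s_i$ to the worst student of $M(p_j)$. $M$ is stable if it has no blocking pair. Given stable matchings $M,M'$, $M^\lor$ is the assignment in which each student unassigned in both $M$ and $M'$ is unassigned, each student assigned to the same project in both is assigned to that project, and every other student is assigned to the worse (in her preference) of her projects in $M$ and $M'$. *)

From mathcomp Require Import all_boot all_order.
Set Implicit Arguments. Unset Strict Implicit. Unset Printing Implicit Defensive.

Record SPAS (S P L : finType) := {
  spref : S -> seq P;     (* student's ranked list of acceptable projects, best first *)
  lpref : L -> seq S;     (* lecturer's ranked list of students, best first *)
  offer : P -> L;
  pcap  : P -> nat;
  lcap  : L -> nat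
}.

Section SPAS_defs.
Variables (S P L : finType) (I : SPAS S P L).

Definition offered (l : L) : {set P} := [set p | offer I p == l].

Definition prefers (T : eqType) (r : seq T) (x y : T) : bool :=
  (x \in r) && (index x r < index y r).

Definition valid_instance : Prop :=
  [/\ forall s, uniq (spref I s),
      forall l, uniq (lpref I l),
      forall l s, (s \in lpref I l) = [exists p, (p \in spref I s) && (offer I p == l)],
      forall l, offered l != set0
    & (forall p, 0 < pcap I p) /\ forall l, (\max_(p in offered l) pcap I p <= lcap I l)
                /\ (lcap I l <= \sum_(p in offered l) pcap I p)].

Definition acceptable (s : S) (p : P) : bool :=
  (p \in spref I s) && (s \in lpref I (offer I p)).

Definition Mp (M : {set S * P}) (p : P) : {set S} := [set s | (s, p) \in M].
Definition Ml (M : {set S * P}) (l : L) : {set S} :=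
  [set s | [exists p, ((s, p) \in M) && (offer I p == l)]].

Definition is_matching (M : {set S * P}) : Prop :=
  [/\ forall s p, (s, p) \in M -> acceptable s p,
      forall s p p', (s, p) \in M -> (s, p') \in M -> p = p',
      forall p, #|Mp M p| <= pcap I p
    & forall l, #|Ml M l| <= lcap I l].

Definition p_under M p := #|Mp M p| < pcap I p.
Definition p_full M p := #|Mp M p| == pcap I p.
Definition l_under M l := #|Ml M l| < lcap I l.
Definition l_full M l := #|Ml M l| == lcap I l.

(* l prefers s to the worst student of X: some member of X is ranked below s *)
Definition lprefers_to_worst (l : L) (s : S) (X : {set S}) : Prop :=
  exists2 s', s' \in X & prefers (lpref I l) s s'.

Definition blocks (M : {set S * P}) (s : S) (p : P) : Prop :=
  let l := offer I p in
  [/\ acceptable s p, (s, p) \notin M,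
      (forall p', (s, p') \in M -> prefers (spref I s) p p')
    & [\/ p_under M p /\ l_under M l,
          [/\ p_under M p, l_full M l & s \in Ml M l],
          [/\ p_under M p, l_full M l & lprefers_to_worst l s (Ml M l)]
        | p_full M p /\ lprefers_to_worst l s (Mp M p)]].

Definition stable (M : {set S * P}) : Prop :=
  is_matching M /\ forall s p, ~ blocks M s p.

Definition assigned (M : {set S * P}) (s : S) : bool := [exists p, (s, p) \in M].

Definition Mvee (M M' : {set S * P}) : {set S * P} :=
  [set x : S * P |
    let: (s, p) := x in
    [|| ((s, p) \in M) && ((s, p) \in M'),
        ((s, p) \in M) && ~~ assigned M' s,
        ((s, p) \in M') && ~~ assigned M s,
        ((s, p) \in M) &&
          [exists p', [&& (s, p') \in M', p' != p & prefers (spref I s) p' p]]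
      | ((s, p) \in M') &&
          [exists p', [&& (s, p') \in M, p' != p & prefers (spref I s) p' p]]]].

End SPAS_defs.

From mathcomp Require Import all_boot all_order zify.
Set Implicit Arguments. Unset Strict Implicit. Unset Printing Implicit Defensive.

(* Let X be the set of students who prefer their project in M to their
   situation in M', and Y the set of those who prefer M' to M.  Then M^\/
   gives the students of X their M'-project and everybody else their
   M-project, so only the capacities are at stake.  Since a student of X does
   not block M' with her M-project p, the lecturer of p ranks every student of
   M'(p) above her; symmetrically for Y, so no project is shared by an
   X-student in M and a Y-student in M'.  From this, for each lecturer l,
   either every project of l has at least as many X-students in M' as in M,
   or l is full in M' and every project of l keeps at least as many non-X
   students in M as in M'.  Either way |M(l) ∩ X| <= |M'(l) ∩ X|.  Every
   student of X is assigned in M, so summing over l forces equality for every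
   l (and X is assigned in M'); comparing the per-project counts with these
   equal totals gives |M(p) \ X| + |M'(p) ∩ X| <= c_p, and similarly for
   lecturers. *)

Lemma card_bigcup_disjoint (I T : finType) (Q : pred I) (B : I -> {set T}) :
    (forall i j x, Q i -> Q j -> x \in B i -> x \in B j -> i = j) ->
  #|\bigcup_(i | Q i) B i| = \sum_(i | Q i) #|B i|.
Proof.
move=> disjB.
have -> : \sum_(i | Q i) #|B i| = \sum_(i | Q i) \sum_x (x \in B i : nat).
  apply: eq_bigr => i _; rewrite -sum1_card big_mkcond /=.
  by apply: eq_bigr => x _; case: (x \in B i).
rewrite exchange_big /= -sum1_card [LHS]big_mkcond /=.
apply: eq_bigr => x _; case: bigcupP => [[i Qi xBi] | xB].
  rewrite (bigD1 i) //= xBi big1 // => j /andP[Qj ji].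
  by case xBj: (x \in B j); rewrite // (disjB _ _ _ Qj Qi xBj xBi) eqxx in ji.
by rewrite big1 // => j Qj; case xBj: (x \in B j) => //; case: xB; exists j.
Qed.

Lemma leq_sum_eq (I : finType) (Q : pred I) (E1 E2 : I -> nat) :
    (forall i, Q i -> E1 i <= E2 i) ->
    \sum_(i | Q i) E2 i <= \sum_(i | Q i) E1 i ->
  forall i, Q i -> E1 i = E2 i.
Proof.
move=> leE sum_ge i Qi.
have [_ eq_sum] := leqif_sum (fun i Qi => leqif_eq (leE i Qi)).
have : \sum_(i | Q i) E1 i == \sum_(i | Q i) E2 i.
  by rewrite eqn_leq sum_ge andbT; apply: leq_sum.
by rewrite eq_sum => /forallP /(_ i) /implyP /(_ Qi) /eqP.
Qed.

Lemma prefers_irr (T : eqType) (r : seq T) x : prefers r x x = false.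
Proof. by rewrite /prefers ltnn andbF. Qed.

Lemma prefers_asym (T : eqType) (r : seq T) x y :
  prefers r x y -> prefers r y x = false.
Proof. by rewrite /prefers => /andP[_ lt_xy]; rewrite ltnNge (ltnW lt_xy) andbF. Qed.

Lemma prefers_total (T : eqType) (r : seq T) x y :
  x \in r -> y \in r -> x != y -> prefers r x y || prefers r y x.
Proof.
rewrite /prefers => xr yr; rewrite xr yr /=; apply: contraNT.
by case: ltngtP => // /(congr1 (nth x r)); rewrite !nth_index // => ->.
Qed.

Lemma prefers_converse (T : eqType) (r : seq T) x y :
  x \in r -> y \in r -> x != y -> ~~ prefers r x y -> prefers r y x.
Proof. by move=> xr yr nxy; case/orP: (prefers_total xr yr nxy) => ->. Qed.

Section SPAS.
Variables (S P L : finType) (I : SPAS S P L).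
Implicit Types (M : {set S * P}) (Z : {set S}) (s t : S) (p : P) (l : L).

(* Being unassigned in [M'] counts as worse than any project. *)
Definition better_off M M' : {set S} :=
  [set s | [exists p, ((s, p) \in M) &&
     [forall p', ((s, p') \in M') ==> prefers (spref I s) p p']]].

Lemma better_offP M M' s :
  reflect (exists2 p, (s, p) \in M &
             forall p', (s, p') \in M' -> prefers (spref I s) p p')
          (s \in better_off M M').
Proof.
rewrite inE; apply: (iffP existsP) => [[p /andP[sp /forallP better]] | [p sp better]].
  by exists p => // p'; apply/implyP/better.
by exists p; rewrite sp; apply/forallP => p'; apply/implyP/better.
Qed.

Lemma better_off_assigned M M' s : s \in better_off M M' -> assigned M s.
Proof. by case/better_offP => p sp _; apply/existsP; exists p. Qed.

Lemma mem_Mp M s p : (s \in Mp M p) = ((s, p) \in M).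
Proof. by rewrite inE. Qed.

Lemma Mp_Ml M s p : s \in Mp M p -> s \in Ml I M (offer I p).
Proof. by rewrite mem_Mp inE => sp; apply/existsP; exists p; rewrite sp eqxx. Qed.

Section Matching.
Variables (M : {set S * P}) (hM : is_matching I M).

Lemma matching_acceptable s p : (s, p) \in M -> acceptable I s p.
Proof. by case: hM => acc _ _ _; apply: acc. Qed.

Lemma matching_functional s p p' : (s, p) \in M -> (s, p') \in M -> p = p'.
Proof. by case: hM => _ fun_M _ _; apply: fun_M. Qed.

Lemma card_Mp_le p : #|Mp M p| <= pcap I p.
Proof. by case: hM. Qed.

Lemma card_Ml_le l : #|Ml I M l| <= lcap I l.
Proof. by case: hM. Qed.

Lemma p_fullNunder p : p_full I M p = ~~ p_under I M p.
Proof. by rewrite /p_full /p_under ltn_neqAle card_Mp_le andbT negbK. Qed.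

Lemma l_fullNunder l : l_full I M l = ~~ l_under I M l.
Proof. by rewrite /l_full /l_under ltn_neqAle card_Ml_le andbT negbK. Qed.

Lemma card_Ml_setI Z l :
  #|Ml I M l :&: Z| = \sum_(p | offer I p == l) #|Mp M p :&: Z|.
Proof.
have -> : Ml I M l :&: Z = \bigcup_(p | offer I p == l) (Mp M p :&: Z).
  apply/setP => s; rewrite !inE; apply/andP/bigcupP.
    by case=> /existsP[p /andP[sp ol]] sZ; exists p; rewrite // inE mem_Mp sp.
  case=> p ol /setIP[sp sZ]; split=> //.
  by apply/existsP; exists p; rewrite -mem_Mp sp.
rewrite card_bigcup_disjoint // => p q s _ _ /setIP[sp _] /setIP[sq _].
by rewrite !mem_Mp in sp sq; apply: matching_functional sp sq.
Qed.

Lemma card_Ml_setD Z l :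
  #|Ml I M l :\: Z| = \sum_(p | offer I p == l) #|Mp M p :\: Z|.
Proof. by rewrite setDE card_Ml_setI; apply: eq_bigr => p _; rewrite setDE. Qed.

Lemma sum_card_Ml_setI Z :
  \sum_l #|Ml I M l :&: Z| = #|[set s in Z | assigned M s]|.
Proof.
have -> : [set s in Z | assigned M s] = \bigcup_l (Ml I M l :&: Z).
  apply/setP => s; rewrite !inE /assigned; apply/andP/bigcupP.
    case=> sZ /existsP[p sp]; exists (offer I p) => //.
    by rewrite !inE sZ andbT; apply/existsP; exists p; rewrite sp eqxx.
  case=> l _ /setIP[/[!inE] /existsP[p /andP[sp _]] sZ].
  by split=> //; apply/existsP; exists p.
rewrite card_bigcup_disjoint // => l l' s _ _.
rewrite !inE => /andP[/existsP[p /andP[sp /eqP <-]] _].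
by case/andP => /existsP[q /andP[sq /eqP <-]] _; rewrite (matching_functional sp sq).
Qed.

Lemma better_off_project M' s p :
  s \in better_off M M' -> (s, p) \in M ->
  forall p', (s, p') \in M' -> prefers (spref I s) p p'.
Proof.
by case/better_offP => q sq betterq sp p'; rewrite (matching_functional sp sq); apply: betterq.
Qed.

End Matching.

Section Unblocked.
Variables (M M' : {set S * P}) (hM : is_matching I M) (sM' : stable I M').
Variables (s : S) (p : P).
Hypotheses (sX : s \in better_off M M') (sp : (s, p) \in M).
Local Notation l := (offer I p).

Lemma better_off_notin : (s, p) \notin M'.
Proof.
by apply/negP => /(better_off_project hM sX sp); rewrite prefers_irr.
Qed.

Let unblocked :
  ~ [\/ p_under I M' p /\ l_under I M' l,
        [/\ p_under I M' p, l_full I M' l & s \in Ml I M' l],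
        [/\ p_under I M' p, l_full I M' l & lprefers_to_worst I l s (Ml I M' l)]
      | p_full I M' p /\ lprefers_to_worst I l s (Mp M' p)].
Proof.
move=> blocking; apply: (sM'.2 s p); split=> //.
- exact: matching_acceptable sp.
- exact: better_off_notin.
- exact: better_off_project sX sp.
Qed.

Let s_listed : s \in lpref I l.
Proof. by case/andP: (matching_acceptable hM sp). Qed.

Lemma ranked_above_in_lecturer :
  p_under I M' p ->
  l_full I M' l /\ forall t, t \in Ml I M' l -> prefers (lpref I l) t s.
Proof.
move=> pu; have lf : l_full I M' l.
  by rewrite (l_fullNunder sM'.1); apply/negP => lu; apply: unblocked; apply: Or41.
split=> // t tl; apply: prefers_converse => //.
- move: tl; rewrite inE => /existsP[q /andP[tq /eqP ql]].
  by case/andP: (matching_acceptable sM'.1 tq); rewrite ql.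
- by apply/eqP => st; subst t; apply: unblocked; apply: Or42.
- by apply/negP => st; apply: unblocked; apply: Or43; split=> //; exists t.
Qed.

Lemma ranked_above_in_project t : t \in Mp M' p -> prefers (lpref I l) t s.
Proof.
move=> tp; have [pu | pf] := boolP (p_under I M' p).
  exact: (ranked_above_in_lecturer pu).2 _ (Mp_Ml tp).
rewrite mem_Mp in tp; apply: prefers_converse => //.
- by case/andP: (matching_acceptable sM'.1 tp).
- by apply/eqP => st; subst t; move/negP: better_off_notin.
- apply/negP => st; apply: unblocked; apply: Or44.
  by split; [rewrite (p_fullNunder sM'.1) | exists t; rewrite ?mem_Mp].
Qed.

End Unblocked.

Section StablePair.
Variables (M M' : {set S * P}) (sM : stable I M) (sM' : stable I M').
Let hM : is_matching I M := sM.1.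
Let hM' : is_matching I M' := sM'.1.
Local Notation X := (better_off M M').
Local Notation Y := (better_off M' M).

Lemma no_shared_project s t p :
  s \in X -> (s, p) \in M -> t \in Y -> (t, p) \in M' -> False.
Proof.
move=> sX sp tY tp.
have t_above : prefers (lpref I (offer I p)) t s.
  by apply: (ranked_above_in_project hM sM' sX sp); rewrite mem_Mp.
have s_above : prefers (lpref I (offer I p)) s t.
  by apply: (ranked_above_in_project hM' sM tY tp); rewrite mem_Mp.
by rewrite (prefers_asym s_above) in t_above.
Qed.

Lemma indifferent_same_project s p :
  (s, p) \in M' -> s \notin X -> s \notin Y -> (s, p) \in M.
Proof.
move=> sp' nX nY; case: (boolP (assigned M s)) => [/existsP[q sq] | unassigned].
  have [-> // | npq] := eqVneq p q.
  have /andP[pr _] := matching_acceptable hM' sp'.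
  have /andP[qr _] := matching_acceptable hM sq.
  case/orP: (prefers_total pr qr npq) => better.
    case/negP: nY; apply/better_offP; exists p => // q' sq'.
    by rewrite (matching_functional hM sq' sq).
  case/negP: nX; apply/better_offP; exists q => // q' sq'.
  by rewrite (matching_functional hM' sq' sp').
case/negP: nY; apply/better_offP; exists p => // q' sq'.
by case/negP: unassigned; apply/existsP; exists q'.
Qed.

Lemma Mp_setD_subset p :
  (forall t, t \in Mp M' p -> t \notin Y) -> Mp M' p :\: X \subset Mp M p :\: X.
Proof.
move=> noY; apply/subsetP => s /setDP[sp nX].
by rewrite inE nX mem_Mp indifferent_same_project -?mem_Mp ?noY.
Qed.

Lemma card_Mp_setI_le p :
    (Mp M p :&: X != set0 -> p_full I M' p) ->
  #|Mp M p :&: X| <= #|Mp M' p :&: X|.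
Proof.
move=> full; have [-> | /[dup] /full pf /set0Pn[s0 /setIP[s0p s0X]]] :=
  eqVneq (Mp M p :&: X) set0; first by rewrite cards0.
have : Mp M' p :\: X \subset Mp M p :\: X.
  apply: Mp_setD_subset => t tp; apply/negP => tY; rewrite !mem_Mp in s0p tp.
  exact: no_shared_project s0X s0p tY tp.
move/subset_leq_card; move: (card_Mp_le hM p) (eqP pf).
by rewrite -(cardsID X (Mp M p)) -(cardsID X (Mp M' p)); lia.
Qed.

Lemma card_Mp_setD_le s0 p0 p :
    s0 \in X -> (s0, p0) \in M -> p_under I M' p0 -> offer I p = offer I p0 ->
  #|Mp M' p :\: X| <= #|Mp M p :\: X|.
Proof.
move=> s0X s0p0 pu0 op.
have [/existsP[t /andP[tp tY]] | noY] := boolP [exists t, (t \in Mp M' p) && (t \in Y)];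
  last first.
  apply/subset_leq_card/Mp_setD_subset => t tp; apply/negP => tY.
  by case/negP: noY; apply/existsP; exists t; rewrite tp tY.
rewrite mem_Mp in tp.
have pf : p_full I M p.
  rewrite (p_fullNunder hM); apply/negP => pu.
  have [_ /(_ s0) above_t] := ranked_above_in_lecturer hM' sM tY tp pu.
  have [_ /(_ t) above_s0] := ranked_above_in_lecturer hM sM' s0X s0p0 pu0.
  have s0l : s0 \in Ml I M (offer I p) by rewrite op; apply: Mp_Ml; rewrite mem_Mp.
  have tl : t \in Ml I M' (offer I p0) by rewrite -op; apply: Mp_Ml; rewrite mem_Mp.
  by move: (above_s0 tl); rewrite -op (prefers_asym (above_t s0l)).
have /setDidPl -> : [disjoint Mp M p & X].
  apply/pred0P => s /=; apply/negP => /andP[sp sX]; rewrite mem_Mp in sp.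
  exact: no_shared_project sX sp tY tp.
rewrite (eqP pf); apply: leq_trans _ (card_Mp_le hM' p).
exact/subset_leq_card/subsetDl.
Qed.

Lemma lecturer_dichotomy l :
  (forall p, offer I p == l -> #|Mp M p :&: X| <= #|Mp M' p :&: X|) \/
  (#|Ml I M l| <= #|Ml I M' l| /\
   forall p, offer I p == l -> #|Mp M' p :\: X| <= #|Mp M p :\: X|).
Proof.
have [/existsP[s0 /existsP[p0 /and4P[s0p0 s0X /eqP <- pu0]]] | none] :=
  boolP [exists s, exists p, [&& (s, p) \in M, s \in X, offer I p == l & p_under I M' p]].
  right; split=> [|p /eqP op]; last exact: card_Mp_setD_le s0X s0p0 pu0 op.
  have [/eqP -> _] := ranked_above_in_lecturer hM sM' s0X s0p0 pu0.
  exact: card_Ml_le.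
left=> p op; apply: card_Mp_setI_le => /set0Pn[s /setIP[sp sX]].
rewrite (p_fullNunder hM'); apply: contraNN none => pu.
by apply/existsP; exists s; apply/existsP; exists p; rewrite -mem_Mp sp sX op pu.
Qed.

Lemma card_Ml_setI_le l : #|Ml I M l :&: X| <= #|Ml I M' l :&: X|.
Proof.
have [le_p | [le_l le_p]] := lecturer_dichotomy l.
  by rewrite !(card_Ml_setI hM, card_Ml_setI hM'); apply: leq_sum.
move: (leq_sum (index_enum P) le_p); rewrite -(card_Ml_setD hM) -(card_Ml_setD hM').
by rewrite -(cardsID X (Ml I M l)) -(cardsID X (Ml I M' l)) in le_l; lia.
Qed.

Lemma sum_card_Ml_better_off : \sum_l #|Ml I M l :&: X| = #|X|.
Proof.
rewrite (sum_card_Ml_setI hM); apply: eq_card => s.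
by rewrite inE; case sX: (s \in X); rewrite // (better_off_assigned sX).
Qed.

Lemma card_Ml_setI_eq l : #|Ml I M l :&: X| = #|Ml I M' l :&: X|.
Proof.
apply: (@leq_sum_eq _ xpredT (fun l => #|Ml I M l :&: X|) (fun l => #|Ml I M' l :&: X|))
  => // [l' _|]; first exact: card_Ml_setI_le.
rewrite sum_card_Ml_better_off (sum_card_Ml_setI hM').
by apply/subset_leq_card/subsetP => s /setIdP[].
Qed.

Lemma better_off_assigned_other s : s \in X -> assigned M' s.
Proof.
have eqX : #|[set s in X | assigned M' s]| = #|X|.
  rewrite -(sum_card_Ml_setI hM') -sum_card_Ml_better_off.
  by apply: eq_bigr => l _; rewrite card_Ml_setI_eq.
have /(subset_cardP eqX) sameX : [set s in X | assigned M' s] \subset X.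
  by apply/subsetP => s' /setIdP[].
by rewrite -sameX => /setIdP[].
Qed.

Lemma card_Mp_splice_le p : #|Mp M p :\: X| + #|Mp M' p :&: X| <= pcap I p.
Proof.
have [le_p | [le_l le_p]] := lecturer_dichotomy (offer I p).
  have sum_ge : \sum_(q | offer I q == offer I p) #|Mp M' q :&: X| <=
                \sum_(q | offer I q == offer I p) #|Mp M q :&: X|.
    by rewrite -(card_Ml_setI hM) -(card_Ml_setI hM') card_Ml_setI_eq.
  rewrite -(leq_sum_eq le_p sum_ge (eqxx (offer I p))) addnC cardsID.
  exact: card_Mp_le.
have sum_ge : \sum_(q | offer I q == offer I p) #|Mp M q :\: X| <=
              \sum_(q | offer I q == offer I p) #|Mp M' q :\: X|.
  rewrite -(card_Ml_setD hM) -(card_Ml_setD hM').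
  move: le_l (card_Ml_setI_eq (offer I p)).
  by rewrite -(cardsID X (Ml I M _)) -(cardsID X (Ml I M' _)); lia.
rewrite -(leq_sum_eq le_p sum_ge (eqxx (offer I p))) addnC cardsID.
exact: card_Mp_le.
Qed.

Lemma card_Ml_splice_le l : #|Ml I M l :\: X| + #|Ml I M' l :&: X| <= lcap I l.
Proof. by rewrite -card_Ml_setI_eq addnC cardsID; apply: card_Ml_le. Qed.

End StablePair.

Definition splice M M' Z : {set S * P} :=
  [set x in M | x.1 \notin Z] :|: [set x in M' | x.1 \in Z].

Lemma mem_splice M M' Z s p :
  ((s, p) \in splice M M' Z) = if s \in Z then (s, p) \in M' else (s, p) \in M.
Proof. by rewrite !inE /=; case: (s \in Z); rewrite ?andbT ?andbF ?orbF. Qed.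

Lemma Mp_splice M M' Z p :
  Mp (splice M M' Z) p = (Mp M p :\: Z) :|: (Mp M' p :&: Z).
Proof.
apply/setP => s; rewrite mem_Mp mem_splice !inE.
by case: (s \in Z); rewrite /= ?andbT ?andbF ?orbF.
Qed.

Lemma Ml_splice M M' Z l :
  Ml I (splice M M' Z) l = (Ml I M l :\: Z) :|: (Ml I M' l :&: Z).
Proof.
apply/setP => s; rewrite !inE; case sZ: (s \in Z); rewrite /= ?andbT ?andbF ?orbF;
  by apply: eq_existsb => p; rewrite mem_splice sZ.
Qed.

Lemma splice_matching M M' Z :
    is_matching I M -> is_matching I M' ->
    (forall p, #|Mp M p :\: Z| + #|Mp M' p :&: Z| <= pcap I p) ->
    (forall l, #|Ml I M l :\: Z| + #|Ml I M' l :&: Z| <= lcap I l) ->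
  is_matching I (splice M M' Z).
Proof.
move=> hM hM' pcapZ lcapZ; split.
- move=> s p; rewrite mem_splice; case: (s \in Z) => sp.
    exact: matching_acceptable hM' _ _ sp.
  exact: matching_acceptable sp.
- move=> s p p'; rewrite !mem_splice; case: (s \in Z) => sp sp'.
    exact: matching_functional hM' _ _ _ sp sp'.
  exact: matching_functional sp sp'.
- by move=> p; rewrite Mp_splice; apply: leq_trans (leq_card_setU _ _) (pcapZ p).
- by move=> l; rewrite Ml_splice; apply: leq_trans (leq_card_setU _ _) (lcapZ l).
Qed.

Lemma matching_subset M N : is_matching I N -> M \subset N -> is_matching I M.
Proof.
move=> hN /subsetP MN; split.
- by move=> s p /MN; apply: matching_acceptable.
- by move=> s p p' /MN sp /MN sp'; apply: matching_functional sp sp'.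
- move=> p; apply: leq_trans (card_Mp_le hN p).
  by apply/subset_leq_card/subsetP => s; rewrite !mem_Mp => /MN.
- move=> l; apply: leq_trans (card_Ml_le hN l).
  apply/subset_leq_card/subsetP => s; rewrite !inE => /existsP[p /andP[sp lp]].
  by apply/existsP; exists p; rewrite MN.
Qed.

Lemma Mvee_sub_splice M M' :
  stable I M -> stable I M' -> Mvee I M M' \subset splice M M' (better_off M M').
Proof.
move=> sM sM'; apply/subsetP => -[s p]; rewrite mem_splice inE /=.
case/orP=> [|/orP[|/orP[|/orP[]]]] /andP[sp].
- by case: ifP.
- move=> unassigned; case: ifP => // sX.
  by rewrite (better_off_assigned_other sM sM' sX) in unassigned.
- move=> unassigned; have sY : s \in better_off M' M.
    apply/better_offP; exists p => // q sq.
    by case/negP: unassigned; apply/existsP; exists q.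
  by rewrite (better_off_assigned_other sM' sM sY) in unassigned.
- case/existsP=> p' /and3P[sp' _ better]; case: ifP => // sX.
  by move: (better_off_project sM.1 sX sp sp'); rewrite (prefers_asym better).
- case/existsP=> p' /and3P[sp' _ better]; case: ifP => // /negP[].
  apply/better_offP; exists p' => // q sq.
  by rewrite (matching_functional sM'.1 sq sp).
Qed.

End SPAS.

Theorem lemma11 (S P L : finType) (I : SPAS S P L) (M M' : {set S * P}) :
  valid_instance I -> stable I M -> stable I M' -> is_matching I (Mvee I M M').
Proof.
move=> _ sM sM'; apply: matching_subset (Mvee_sub_splice sM sM').
apply: splice_matching; [exact: sM.1 | exact: sM'.1 | |].
- exact: card_Mp_splice_le.
- exact: card_Ml_splice_le.
Qed.
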